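(* Let $\mathcal H$ be a separable complex Hilbert space with canonical orthonormal basis $\{e_n\}$ and $S_2$ the Hilbert–Schmidt operators with $\langle\eta,\tau\rangle_2=\operatorname{tr}(\eta^*\tau)$. For a non-negative operator $A\in\mathcal B(S_2)$ there exists a family of selfadjoint operators $\{a_{nm}\}_{n,m\in\mathbb N}\subset\mathcal B(\mathcal H)$ such that $$A\eta=\sum_{n,m}\hat\varepsilon_{nm}\eta\,a_{nm},\qquad \eta\in S_2,$$ where $a_{nn}\ge0$ for all $n$. Moreover, the $a_{nn}$ are positive (resp. positive definite) if $A$ is positive (resp. positive definite), with greatest lower bounds $m_{a_{nn}}\ge m_A$ for all $n\in\mathbb N$.
   Context: $\varepsilon_{nm}=|e_n\rangle\langle e_m|$ (so $\varepsilon_{nm}f=\langle e_m,f\rangle e_n$) and $\hat\varepsilon_{nm}=\frac{1+i}{2}\varepsilon_{nm}+\frac{1-i}{2}\varepsilon_{mn}$ (selfadjoint; $\hat\varepsilon_{nn}=\varepsilon_{nn}$). Inner products are anti-linear in the left argument. For a selfadjoint bounded operator $T$ on a Hilbert space, $m_T=\inf\{\langle x,Tx\rangle:\|x\|=1\}$ is its greatest lower bound; $T\ge0$ if $\langle x,Tx\rangle\ge 0$ for all $x$, positive if $\langle x,Tx\rangle>0$ for $x\ne0$, positive definite if $m_T>0$. *)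

From Stdlib Require Import Reals Arith.
From Coquelicot Require Import Coquelicot.
Open Scope R_scope.

(** The separable Hilbert space H is modelled as l^2(N; C): vectors are
    sequences nat -> C, the l^2 ones are those with square-summable modulus. Inner product anti-linear on the left. *)
Definition vec := nat -> C.
Definition op := vec -> vec.

Definition vadd (x y : vec) : vec := fun k => Cplus (x k) (y k).
Definition vscal (c : C) (x : vec) : vec := fun k => Cmult c (x k).
Definition vsub (x y : vec) : vec := fun k => Cminus (x k) (y k).
Definition vzero : vec := fun _ => RtoC 0.
Definition veq (x y : vec) : Prop := forall k, x k = y k.
Definition e (n : nat) : vec := fun k => if Nat.eqb k n then RtoC 1 else RtoC 0.

Definition l2 (x : vec) : Prop := ex_series (fun k => (Cmod (x k)) ^ 2).
Definition nsq (x : vec) : R := Series (fun k => (Cmod (x k)) ^ 2).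
Definition ip (x y : vec) : C :=
  (Series (fun k => Re (Cmult (Cconj (x k)) (y k))),
   Series (fun k => Im (Cmult (Cconj (x k)) (y k)))).

Definition bounded_lin {V : Type} (mem : V -> Prop) (eqv : V -> V -> Prop)
  (add : V -> V -> V) (scal : C -> V -> V) (nr : V -> R) (T : V -> V) : Prop :=
  (forall x, mem x -> mem (T x)) /\
  (forall x y, mem x -> mem y -> eqv x y -> eqv (T x) (T y)) /\
  (forall x y, mem x -> mem y -> eqv (T (add x y)) (add (T x) (T y))) /\
  (forall c x, mem x -> eqv (T (scal c x)) (scal c (T x))) /\
  (exists M, forall x, mem x -> nr (T x) <= M * nr x).

Definition is_nonneg {V : Type} (mem : V -> Prop) (ipV : V -> V -> C) (T : V -> V) : Prop :=
  forall x, mem x -> Im (ipV x (T x)) = 0 /\ 0 <= Re (ipV x (T x)).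

Definition is_positive {V : Type} (mem : V -> Prop) (eqv : V -> V -> Prop) (zero : V)
  (ipV : V -> V -> C) (T : V -> V) : Prop :=
  is_nonneg mem ipV T /\ forall x, mem x -> ~ eqv x zero -> 0 < Re (ipV x (T x)).

Definition qf_vals {V : Type} (mem : V -> Prop) (nr : V -> R) (ipV : V -> V -> C)
  (T : V -> V) (r : R) : Prop :=
  exists x, mem x /\ nr x = 1 /\ r = Re (ipV x (T x)).

Definition is_glb (E : R -> Prop) (m : R) : Prop :=
  (forall r, E r -> m <= r) /\ (forall m', (forall r, E r -> m' <= r) -> m' <= m).

Definition posdef {V : Type} (mem : V -> Prop) (nr : V -> R) (ipV : V -> V -> C)
  (T : V -> V) : Prop :=
  exists m, is_glb (qf_vals mem nr ipV T) m /\ 0 < m.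

Definition Hbounded (T : op) : Prop := bounded_lin l2 veq vadd vscal nsq T.
Definition selfadjointH (T : op) : Prop :=
  Hbounded T /\ forall x y, l2 x -> l2 y -> ip x (T y) = ip (T x) y.

Definition op_eq (S T : op) : Prop := forall x, l2 x -> veq (S x) (T x).
Definition op_add (S T : op) : op := fun x => vadd (S x) (T x).
Definition op_scal (c : C) (S : op) : op := fun x => vscal c (S x).
Definition op_sub (S T : op) : op := fun x => vsub (S x) (T x).
Definition op_zero : op := fun _ => vzero.

Definition HS (eta : op) : Prop :=
  Hbounded eta /\ ex_series (fun n => nsq (eta (e n))).
Definition hs_nsq (eta : op) : R := Series (fun n => nsq (eta (e n))).
(** <eta, tau>_2 = tr(eta^* tau) = sum_n <eta e_n, tau e_n> *)
Definition ip2 (eta tau : op) : C :=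
  (Series (fun n => Re (ip (eta (e n)) (tau (e n)))),
   Series (fun n => Im (ip (eta (e n)) (tau (e n))))).

Definition S2bounded (A : op -> op) : Prop :=
  bounded_lin HS op_eq op_add op_scal hs_nsq A.

(** eps_nm f = <e_m, f> e_n ;  epshat_nm = (1+i)/2 eps_nm + (1-i)/2 eps_mn *)
Definition eps (n m : nat) (f : vec) : vec := vscal (ip (e m) f) (e n).
Definition epshat (n m : nat) (f : vec) : vec :=
  vadd (vscal ((1/2)%R, (1/2)%R) (eps n m f)) (vscal ((1/2)%R, (-(1/2))%R) (eps m n f)).

Fixpoint vsum (N : nat) (f : nat -> vec) : vec :=
  match N with
  | O => vzero
  | S N' => vadd (vsum N' f) (f N')
  end.

Definition sq_partial (a : nat -> nat -> op) (eta : op) (N : nat) : op :=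
  fun x => vsum N (fun n => vsum N (fun m => epshat n m (eta (a n m x)))).

(* The coefficients are a_nm = ((1-i)/2) b_nm + ((1+i)/2) b_mn, where b_nm is the operator
   with matrix entries <e_j, b_nm e_k> = <eps_nk, A eps_mj>_2.  A nonnegative A is hermitian
   (polarization), hence so is the matrix of each a_nm.  Since ((1-i)/2)((1+i)/2) = 1/2 and
   ((1-i)/2)^2 + ((1+i)/2)^2 = 0, the square partial sums of the series collapse to
   P_N A (P_N eta), with P_N the projection onto span(e_0, ..., e_(N-1)), and these tend to
   A eta in S_2.  Finally a_nn = b_nn and <y, a_nn y> = <Y, A Y>_2 for the rank-one operator
   Y = e_n y^*, whose Hilbert-Schmidt norm is ||y||; this transfers nonnegativity, positivity
   and lower bounds from A to a_nn. *)

From Stdlib Require Import Reals Arith Lra Lia Psatz FunctionalExtensionality.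
From Coquelicot Require Import Coquelicot.
Open Scope R_scope.

(** * Real series *)

Fixpoint rsum (N : nat) (f : nat -> R) : R :=
  match N with O => 0 | S N' => rsum N' f + f N' end.

Lemma rsum_ext N f g : (forall k, (k < N)%nat -> f k = g k) -> rsum N f = rsum N g.
Proof. induction N as [|N IH]; intros H; simpl; [|rewrite IH, H]; auto. Qed.

Lemma rsum_nonneg N f : (forall k, 0 <= f k) -> 0 <= rsum N f.
Proof. intros H; induction N as [|N IH]; simpl; [lra|]. specialize (H N). lra. Qed.

Lemma rsum_const N c : rsum N (fun _ => c) = INR N * c.
Proof. induction N as [|N IH]; [simpl; ring|]. rewrite S_INR; simpl; rewrite IH; ring. Qed.

Lemma sum_n_rsum (a : nat -> R) n : sum_n a n = rsum (S n) a.
Proof.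
  induction n as [|n IH]; [rewrite sum_O; simpl; rewrite Rplus_0_l; reflexivity|].
  rewrite sum_Sn, IH. reflexivity.
Qed.

Lemma is_series_rsum (a : nat -> R) l : is_series a l <-> is_lim_seq (fun n => rsum n a) l.
Proof.
  rewrite is_lim_seq_incr_1. split; intros H.
  - eapply is_lim_seq_ext; [intros n; apply sum_n_rsum | exact H].
  - eapply is_lim_seq_ext in H; [exact H | intros n; symmetry; apply sum_n_rsum].
Qed.

Lemma is_series_finite (a : nat -> R) K : (forall k, (K <= k)%nat -> a k = 0) -> is_series a (rsum K a).
Proof.
  intros H. apply is_series_rsum.
  apply is_lim_seq_ext_loc with (fun _ => rsum K a); [|apply is_lim_seq_const].
  exists K. intros n Hn. induction Hn as [|n Hn IH]; auto.
  simpl. rewrite H by lia. lra.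
Qed.

Lemma Series_finite (a : nat -> R) K : (forall k, (K <= k)%nat -> a k = 0) -> Series a = rsum K a.
Proof. intros H. apply is_series_unique, is_series_finite, H. Qed.

Lemma Series_single (a : nat -> R) p : (forall k, k <> p -> a k = 0) -> Series a = a p.
Proof.
  intros H. rewrite (Series_finite a (S p)) by (intros k Hk; apply H; lia).
  simpl. rewrite (rsum_ext p a (fun _ => 0)), rsum_const by (intros k Hk; apply H; lia). ring.
Qed.

Lemma ex_series_le_nonneg (a : nat -> R) b : (forall k, 0 <= a k <= b k) -> ex_series b ->
  ex_series a /\ Series a <= Series b.
Proof.
  intros H Hb. split; [|apply Series_le; auto].
  apply (ex_series_le a b); auto.
  intros k. unfold norm; simpl. unfold abs; simpl. rewrite Rabs_pos_eq; apply H.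
Qed.

Lemma ex_series_Rabs_le (a : nat -> R) b : (forall k, Rabs (a k) <= b k) -> ex_series b ->
  ex_series a /\ Rabs (Series a) <= Series b.
Proof.
  intros H Hb.
  destruct (ex_series_le_nonneg (fun k => Rabs (a k)) b) as [Ea Sa]; auto.
  { intros k; split; [apply Rabs_pos | apply H]. }
  split; [apply ex_series_Rabs; auto|].
  eapply Rle_trans; [apply Series_Rabs; auto | exact Sa].
Qed.

Lemma Series_nonneg (a : nat -> R) : (forall k, 0 <= a k) -> ex_series a -> 0 <= Series a.
Proof.
  intros H Ha. replace 0 with (Series (fun _ => 0)) by (apply (Series_finite _ O); auto).
  apply Series_le; auto. intros; split; [lra | auto].
Qed.

Lemma ex_series_of_bounded_rsum (a : nat -> R) B : (forall k, 0 <= a k) -> (forall n, rsum n a <= B) ->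
  ex_series a /\ Series a <= B.
Proof.
  intros Hpos HB.
  destruct (ex_finite_lim_seq_incr (fun n => rsum n a) B) as [l Hl]; auto.
  { intros n. simpl. specialize (Hpos n). lra. }
  assert (Hs : is_series a l) by (apply is_series_rsum; exact Hl).
  split; [exists l; exact Hs|]. rewrite (is_series_unique _ _ Hs).
  apply (is_lim_seq_le _ _ l B HB Hl (is_lim_seq_const B)).
Qed.

Definition rtail (K : nat) (a : nat -> R) : nat -> R := fun k => if (k <? K)%nat then 0 else a k.

Lemma Series_split K (a : nat -> R) : ex_series a ->
  ex_series (rtail K a) /\ Series a = rsum K a + Series (rtail K a).
Proof.
  intros Ha.
  set (h := fun k => if (k <? K)%nat then a k else 0).
  assert (Hh : is_series h (rsum K a)).
  { replace (rsum K a) with (rsum K h).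
    - apply is_series_finite. intros k Hk. unfold h. rewrite (proj2 (Nat.ltb_ge k K)); auto.
    - apply rsum_ext. intros k Hk. unfold h. rewrite (proj2 (Nat.ltb_lt k K)); auto. }
  assert (Et : forall k, rtail K a k = a k - h k).
  { intros k. unfold rtail, h. destruct (k <? K)%nat; ring. }
  assert (Ex : ex_series (rtail K a)).
  { eapply ex_series_ext; [intros k; symmetry; apply Et|].
    apply (ex_series_minus a h); [exact Ha | exists (rsum K a); exact Hh]. }
  split; auto.
  rewrite (Series_ext _ _ Et), Series_minus, (is_series_unique _ _ Hh); [simpl; lra | auto |].
  exists (rsum K a); exact Hh.
Qed.

Lemma rtail_nonneg K (a : nat -> R) : (forall k, 0 <= a k) -> forall k, 0 <= rtail K a k.
Proof. intros H k. unfold rtail. destruct (k <? K)%nat; [lra | auto]. Qed.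

Lemma Series_rtail_vanishes (a : nat -> R) : ex_series a ->
  is_lim_seq (fun K => Series (rtail K a)) 0.
Proof.
  intros Ha.
  assert (Hs := is_lim_seq_minus' _ _ _ _ (is_lim_seq_const (Series a))
                  (proj1 (is_series_rsum a _) (Series_correct a Ha))).
  rewrite Rminus_diag in Hs. eapply is_lim_seq_ext; [|exact Hs].
  intros K. destruct (Series_split K a Ha) as [_ Es]. lra.
Qed.

Lemma rsum_le_Series (a : nat -> R) n : (forall k, 0 <= a k) -> ex_series a -> rsum n a <= Series a.
Proof.
  intros Hpos Ha. destruct (Series_split n a Ha) as [Et Es].
  pose proof (Series_nonneg _ (rtail_nonneg n a Hpos) Et). lra.
Qed.

Lemma term_le_Series (a : nat -> R) p : (forall k, 0 <= a k) -> ex_series a -> a p <= Series a.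
Proof.
  intros Hpos Ha. apply Rle_trans with (rsum (S p) a); [|apply rsum_le_Series; auto].
  simpl. pose proof (rsum_nonneg p a Hpos). lra.
Qed.

Lemma is_lim_seq_scal_0 (c : R) (u : nat -> R) : is_lim_seq u 0 -> is_lim_seq (fun n => c * u n) 0.
Proof.
  intros Hu. replace (Finite 0) with (Rbar_mult c 0) by (simpl; f_equal; ring).
  apply is_lim_seq_scal_l, Hu.
Qed.

Lemma is_lim_seq_0_eventually_lt (t : nat -> R) : is_lim_seq t 0 ->
  forall eps, 0 < eps -> exists N, forall n, (N <= n)%nat -> t n < eps.
Proof.
  intros Ht eps Heps. apply is_lim_seq_spec in Ht.
  destruct (Ht (mkposreal eps Heps)) as [N HN]. exists N. intros n Hn.
  specialize (HN n Hn). simpl in HN. rewrite Rminus_0_r in HN.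
  eapply Rle_lt_trans; [apply Rle_abs | exact HN].
Qed.

Lemma is_lim_seq_rsum K (u : nat -> nat -> R) : (forall k, is_lim_seq (fun N => u N k) 0) ->
  is_lim_seq (fun N => rsum K (u N)) 0.
Proof.
  intros Hu. induction K as [|K IH]; simpl; [apply is_lim_seq_const|].
  replace (Finite 0) with (Finite (0 + 0)) by (f_equal; ring).
  apply is_lim_seq_plus'; auto.
Qed.

Lemma Series_dominated_vanishes (u : nat -> nat -> R) (g : nat -> R) :
  (forall N k, 0 <= u N k <= g k) -> ex_series g -> (forall k, is_lim_seq (fun N => u N k) 0) ->
  is_lim_seq (fun N => Series (u N)) 0.
Proof.
  intros Hug Hg Hu. apply is_lim_seq_spec. intros eps.
  assert (Heps : 0 < eps / 2) by (destruct eps; simpl; lra).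
  destruct (is_lim_seq_0_eventually_lt _ (Series_rtail_vanishes g Hg) _ Heps) as [K HK].
  specialize (HK K (le_n K)).
  destruct (is_lim_seq_0_eventually_lt _ (is_lim_seq_rsum K u Hu) _ Heps) as [N0 HN0].
  exists N0. intros N HN. specialize (HN0 N HN).
  assert (Eu : ex_series (u N)) by (apply (ex_series_le_nonneg _ g); auto).
  destruct (Series_split K (u N) Eu) as [Et Es]. destruct (Series_split K g Hg) as [Etg _].
  assert (Series (rtail K (u N)) <= Series (rtail K g)).
  { apply Series_le; auto. intros k. unfold rtail. destruct (k <? K)%nat; [lra | apply Hug]. }
  assert (0 <= Series (u N)) by (apply Series_nonneg; auto; intros; apply Hug).
  rewrite Rminus_0_r, Rabs_pos_eq by auto. lra.
Qed.

Lemma is_glb_exists (E : R -> Prop) : (exists r, E r) -> (exists m, forall r, E r -> m <= r) ->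
  exists m, is_glb E m.
Proof.
  intros [r0 Hr0] [m Hm].
  destruct (completeness (fun r => E (- r))) as [L [HL1 HL2]].
  - exists (- m). intros r Hr. specialize (Hm _ Hr). lra.
  - exists (- r0). rewrite Ropp_involutive. exact Hr0.
  - exists (- L). split.
    + intros r Hr. assert (E (- - r)) by (rewrite Ropp_involutive; exact Hr).
      specialize (HL1 _ H). lra.
    + intros m' Hm'. enough (L <= - m') by lra.
      apply HL2. intros r Hr. specialize (Hm' _ Hr). lra.
Qed.

(** * Complex numbers and complex series *)

Ltac cfield := apply injective_projections; simpl; field.

Definition Cnorm2 (c : C) : R := fst c * fst c + snd c * snd c.

Lemma Cnorm2_nonneg c : 0 <= Cnorm2 c.
Proof. unfold Cnorm2. nra. Qed.

Lemma Cmod_pow2 c : Cmod c ^ 2 = Cnorm2 c.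
Proof. unfold Cmod, Cnorm2. rewrite pow2_sqrt; [ring | nra]. Qed.

Lemma Cnorm2_Cplus_le a b : Cnorm2 (Cplus a b) <= 2 * Cnorm2 a + 2 * Cnorm2 b.
Proof.
  destruct a as [a1 a2], b as [b1 b2]; unfold Cnorm2; simpl.
  pose proof (Rle_0_sqr (a1 - b1)); pose proof (Rle_0_sqr (a2 - b2)). unfold Rsqr in *. lra.
Qed.

Lemma Cnorm2_Cmult a b : Cnorm2 (Cmult a b) = Cnorm2 a * Cnorm2 b.
Proof. destruct a as [a1 a2], b as [b1 b2]; unfold Cnorm2; simpl. ring. Qed.

Lemma Cnorm2_Cconj a : Cnorm2 (Cconj a) = Cnorm2 a.
Proof. destruct a as [a1 a2]; unfold Cnorm2; simpl. ring. Qed.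

Lemma Cnorm2_Copp a : Cnorm2 (Copp a) = Cnorm2 a.
Proof. destruct a as [a1 a2]; unfold Cnorm2; simpl. ring. Qed.

Lemma Cnorm2_RtoC0 : Cnorm2 (RtoC 0) = 0.
Proof. unfold Cnorm2; simpl; ring. Qed.

Lemma Cnorm2_eq0 a : Cnorm2 a = 0 -> a = RtoC 0.
Proof.
  destruct a as [a1 a2]; unfold Cnorm2; simpl. intros H.
  assert (a1 = 0) by nra. assert (a2 = 0) by nra. subst. reflexivity.
Qed.

Lemma Cnorm2_Cminus_swap a b : Cnorm2 (Cminus a b) = Cnorm2 (Cminus b a).
Proof. destruct a as [a1 a2], b as [b1 b2]; unfold Cnorm2; simpl. ring. Qed.

(* The encoding of [ip] and [ip2], which are thus [Cseries] by conversion. *)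
Definition Cseries (f : nat -> C) : C := (Series (fun n => fst (f n)), Series (fun n => snd (f n))).
Definition ex_Cseries (f : nat -> C) : Prop :=
  ex_series (fun n => fst (f n)) /\ ex_series (fun n => snd (f n)).

Lemma Cseries_ext f g : (forall n, f n = g n) -> Cseries f = Cseries g.
Proof. intros H. unfold Cseries. f_equal; apply Series_ext; intros; rewrite H; auto. Qed.

Lemma Cseries_plus f g : ex_Cseries f -> ex_Cseries g ->
  Cseries (fun n => Cplus (f n) (g n)) = Cplus (Cseries f) (Cseries g).
Proof. intros [F1 F2] [G1 G2]. unfold Cseries, Cplus. cbn [fst snd]. rewrite <- !Series_plus; auto. Qed.

Lemma Cseries_scal c f : ex_Cseries f -> Cseries (fun n => Cmult c (f n)) = Cmult c (Cseries f).
Proof.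
  intros [F1 F2]. unfold Cseries, Cmult. cbn [fst snd]. f_equal.
  - rewrite Series_minus, !Series_scal_l; auto;
      apply (ex_series_scal_l (V := R_NormedModule)); auto.
  - rewrite Series_plus, !Series_scal_l; auto;
      apply (ex_series_scal_l (V := R_NormedModule)); auto.
Qed.

Lemma Cseries_Cconj f : Cseries (fun n => Cconj (f n)) = Cconj (Cseries f).
Proof. unfold Cseries, Cconj. cbn [fst snd]. f_equal. apply Series_opp. Qed.

Lemma Cseries_single f p : (forall n, n <> p -> f n = RtoC 0) -> Cseries f = f p.
Proof.
  intros H. unfold Cseries. apply injective_projections; cbn [fst snd];
    (rewrite (Series_single _ p); [auto | intros n Hn; rewrite H; auto]).
Qed.

Fixpoint csum (N : nat) (f : nat -> C) : C :=
  match N with O => RtoC 0 | S N' => Cplus (csum N' f) (f N') end.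

Lemma csum_ext N f g : (forall k, (k < N)%nat -> f k = g k) -> csum N f = csum N g.
Proof. induction N as [|N IH]; intros H; simpl; [|rewrite IH, H]; auto. Qed.

Lemma csum_plus N f g : csum N (fun k => Cplus (f k) (g k)) = Cplus (csum N f) (csum N g).
Proof. induction N as [|N IH]; simpl; [|rewrite IH]; cfield. Qed.

Lemma csum_scal N c f : csum N (fun k => Cmult c (f k)) = Cmult c (csum N f).
Proof. induction N as [|N IH]; simpl; [|rewrite IH]; cfield. Qed.

Lemma csum_Cconj N f : csum N (fun k => Cconj (f k)) = Cconj (csum N f).
Proof. induction N as [|N IH]; simpl; [|rewrite IH]; cfield. Qed.

Lemma csum_single N f p : (forall k, k <> p -> f k = RtoC 0) ->
  csum N f = if (p <? N)%nat then f p else RtoC 0.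
Proof.
  intros H. induction N as [|N IH]; simpl; auto.
  rewrite IH. destruct (Nat.eq_dec p N) as [->|Hne].
  - rewrite Nat.ltb_irrefl, (proj2 (Nat.ltb_lt N (S N))) by lia. cfield.
  - rewrite (H N) by auto.
    destruct (Nat.ltb_spec p N), (Nat.ltb_spec p (S N)); try lia; cfield.
Qed.

Lemma csum_fst N f : fst (csum N f) = rsum N (fun k => fst (f k)).
Proof. induction N as [|N IH]; simpl; [|rewrite IH]; auto. Qed.

Lemma csum_snd N f : snd (csum N f) = rsum N (fun k => snd (f k)).
Proof. induction N as [|N IH]; simpl; [|rewrite IH]; auto. Qed.

Definition Clim (s : nat -> C) (l : C) : Prop := is_lim_seq (fun n => Cnorm2 (Cminus (s n) l)) 0.

Lemma Clim_ext s t l : (forall n, s n = t n) -> Clim s l -> Clim t l.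
Proof. intros E. apply is_lim_seq_ext. intros n. rewrite E. auto. Qed.

Lemma Clim_of_le s l (t : nat -> R) :
  (forall n, Cnorm2 (Cminus (s n) l) <= t n) -> is_lim_seq t 0 -> Clim s l.
Proof.
  intros H Ht. apply (is_lim_seq_le_le (fun _ => 0) _ t 0); [|apply is_lim_seq_const | exact Ht].
  intros n. split; [apply Cnorm2_nonneg | apply H].
Qed.

Lemma Clim_unique s l m : Clim s l -> Clim s m -> l = m.
Proof.
  intros Hl Hm.
  assert (Hsum := is_lim_seq_plus' _ _ _ _ (is_lim_seq_scal_l _ 2 _ Hl) (is_lim_seq_scal_l _ 2 _ Hm)).
  simpl in Hsum. rewrite Rmult_0_r, Rplus_0_r in Hsum.
  assert (Hle : Rbar_le (Cnorm2 (Cminus l m)) 0).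
  { refine (is_lim_seq_le (fun _ => Cnorm2 (Cminus l m)) _ _ _ _ (is_lim_seq_const _) Hsum).
    intros n. simpl. replace (Cminus l m) with (Cplus (Cminus l (s n)) (Cminus (s n) m)) by cfield.
    rewrite (Cnorm2_Cminus_swap (s n) l). apply Cnorm2_Cplus_le. }
  simpl in Hle. pose proof (Cnorm2_eq0 _ (Rle_antisym _ _ Hle (Cnorm2_nonneg _))) as E.
  revert E. destruct l, m. unfold Cminus, Cplus, Copp, RtoC. simpl.
  intros E. injection E. intros. f_equal; lra.
Qed.

Lemma Clim_Cconj s l : Clim s l -> Clim (fun n => Cconj (s n)) (Cconj l).
Proof.
  apply is_lim_seq_ext. intros n. rewrite <- Cnorm2_Cconj. f_equal. cfield.
Qed.

Lemma Clim_csum_Cseries f : ex_Cseries f -> Clim (fun K => csum K f) (Cseries f).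
Proof.
  intros [F1 F2].
  apply Series_correct, is_series_rsum in F1. apply Series_correct, is_series_rsum in F2.
  assert (D1 := is_lim_seq_minus' _ _ _ _ F1 (is_lim_seq_const (Series (fun n => fst (f n))))).
  assert (D2 := is_lim_seq_minus' _ _ _ _ F2 (is_lim_seq_const (Series (fun n => snd (f n))))).
  rewrite Rminus_diag in D1, D2.
  assert (L := is_lim_seq_plus' _ _ _ _ (is_lim_seq_mult' _ _ _ _ D1 D1)
                 (is_lim_seq_mult' _ _ _ _ D2 D2)).
  rewrite Rmult_0_r, Rplus_0_r in L.
  eapply is_lim_seq_ext; [|exact L]. intros K.
  unfold Cnorm2, Cminus, Cplus, Copp, Cseries. simpl. rewrite csum_fst, csum_snd. ring.
Qed.

(** * The space l^2 *)

Lemma veq_eq x y : veq x y -> x = y.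
Proof. apply functional_extensionality. Qed.

Lemma nsq_Cnorm2 x : nsq x = Series (fun k => Cnorm2 (x k)).
Proof. apply Series_ext. intros; apply Cmod_pow2. Qed.

Lemma l2_Cnorm2 x : l2 x <-> ex_series (fun k => Cnorm2 (x k)).
Proof. split; apply ex_series_ext; intros; rewrite Cmod_pow2; auto. Qed.

Lemma nsq_nonneg x : l2 x -> 0 <= nsq x.
Proof.
  intros H. rewrite nsq_Cnorm2.
  apply Series_nonneg; [intros; apply Cnorm2_nonneg | apply l2_Cnorm2, H].
Qed.

Lemma Cnorm2_le_nsq x p : l2 x -> Cnorm2 (x p) <= nsq x.
Proof.
  intros H. rewrite nsq_Cnorm2.
  apply (term_le_Series (fun k => Cnorm2 (x k))); [intros; apply Cnorm2_nonneg | apply l2_Cnorm2, H].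
Qed.

Lemma l2_of_le x y : (forall k, Cnorm2 (x k) <= Cnorm2 (y k)) -> l2 y -> l2 x /\ nsq x <= nsq y.
Proof.
  intros H Hy. apply l2_Cnorm2 in Hy. rewrite !nsq_Cnorm2, l2_Cnorm2.
  apply ex_series_le_nonneg; auto. intros k; split; [apply Cnorm2_nonneg | apply H].
Qed.

Lemma l2_vscal c x : l2 x -> l2 (vscal c x).
Proof.
  rewrite !l2_Cnorm2. intros H. unfold vscal.
  eapply ex_series_ext; [|apply (ex_series_scal_l (V := R_NormedModule) (Cnorm2 c) _ H)].
  intros n. symmetry. apply Cnorm2_Cmult.
Qed.

Lemma nsq_vscal c x : nsq (vscal c x) = Cnorm2 c * nsq x.
Proof.
  rewrite !nsq_Cnorm2, <- Series_scal_l. apply Series_ext. intros; apply Cnorm2_Cmult.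
Qed.

Lemma l2_vadd x y : l2 x -> l2 y -> l2 (vadd x y) /\ nsq (vadd x y) <= 2 * nsq x + 2 * nsq y.
Proof.
  rewrite !l2_Cnorm2, !nsq_Cnorm2. intros Hx Hy.
  assert (Hs : ex_series (fun k => 2 * Cnorm2 (x k) + 2 * Cnorm2 (y k))).
  { apply (ex_series_plus (V := R_NormedModule)); apply (ex_series_scal_l (V := R_NormedModule)); auto. }
  destruct (ex_series_le_nonneg (fun k => Cnorm2 (vadd x y k)) _
              (fun k => conj (Cnorm2_nonneg _) (Cnorm2_Cplus_le (x k) (y k))) Hs) as [H1 H2].
  split; auto. rewrite Series_plus, !Series_scal_l in H2; auto;
    apply (ex_series_scal_l (V := R_NormedModule)); auto.
Qed.

Lemma vsub_vadd x y : vsub x y = vadd x (vscal (RtoC (-1)) y).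
Proof. apply functional_extensionality; intros k; unfold vadd, vsub, vscal. cfield. Qed.

Lemma Cnorm2_RtoC_m1 : Cnorm2 (RtoC (-1)) = 1.
Proof. unfold Cnorm2; simpl; ring. Qed.

Lemma e_neq n k : k <> n -> e n k = RtoC 0.
Proof. intros H. unfold e. rewrite (proj2 (Nat.eqb_neq k n) H). reflexivity. Qed.

Lemma e_eq n : e n n = RtoC 1.
Proof. unfold e. rewrite Nat.eqb_refl. reflexivity. Qed.

Lemma is_series_Cnorm2_e n : is_series (fun k => Cnorm2 (e n k)) 1.
Proof.
  replace 1 with (rsum (S n) (fun k => Cnorm2 (e n k))).
  - apply is_series_finite. intros k Hk. rewrite e_neq by lia. apply Cnorm2_RtoC0.
  - simpl. rewrite (rsum_ext n _ (fun _ => 0)), rsum_const, e_eq.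
    + unfold Cnorm2; simpl; ring.
    + intros k Hk. rewrite e_neq by lia. apply Cnorm2_RtoC0.
Qed.

Lemma l2_e n : l2 (e n).
Proof. apply l2_Cnorm2. exists 1. apply is_series_Cnorm2_e. Qed.

Lemma nsq_e n : nsq (e n) = 1.
Proof. rewrite nsq_Cnorm2. apply is_series_unique, is_series_Cnorm2_e. Qed.

Lemma is_series_Cnorm2_vzero : is_series (fun k => Cnorm2 (vzero k)) 0.
Proof.
  apply (is_series_ext (fun _ => 0)); [intros; symmetry; apply Cnorm2_RtoC0|].
  apply (is_series_finite (fun _ => 0) O). auto.
Qed.

Lemma l2_vzero : l2 vzero.
Proof. apply l2_Cnorm2. exists 0. apply is_series_Cnorm2_vzero. Qed.

Lemma nsq_vzero : nsq vzero = 0.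
Proof. rewrite nsq_Cnorm2. apply is_series_unique, is_series_Cnorm2_vzero. Qed.

Lemma vsum_apply N f p : vsum N f p = csum N (fun k => f k p).
Proof. induction N as [|N IH]; simpl; auto. unfold vadd. rewrite IH. auto. Qed.

Lemma l2_vsum K f : (forall k, (k < K)%nat -> l2 (f k)) -> l2 (vsum K f).
Proof.
  induction K as [|K IH]; intros H; simpl; [apply l2_vzero|].
  apply l2_vadd; auto.
Qed.

Definition vtrunc (K : nat) (x : vec) : vec := fun k => if (k <? K)%nat then x k else RtoC 0.
Definition vtail (K : nat) (x : vec) : vec := fun k => if (k <? K)%nat then RtoC 0 else x k.

Lemma vtrunc_vsum K x : vtrunc K x = vsum K (fun k => vscal (x k) (e k)).
Proof.
  apply functional_extensionality; intros p. rewrite vsum_apply. unfold vtrunc.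
  rewrite (csum_single K _ p).
  - unfold vscal. rewrite e_eq. destruct (p <? K)%nat; cfield.
  - intros k Hk. unfold vscal. rewrite e_neq by auto. cfield.
Qed.

Lemma l2_vtrunc K x : l2 (vtrunc K x).
Proof. rewrite vtrunc_vsum. apply l2_vsum. intros; apply l2_vscal, l2_e. Qed.

Lemma vadd_vtrunc_vtail K x : vadd (vtrunc K x) (vtail K x) = x.
Proof.
  apply functional_extensionality; intros k. unfold vadd, vtrunc, vtail.
  destruct (k <? K)%nat; cfield.
Qed.

Lemma Cnorm2_vtail_le K x k : Cnorm2 (vtail K x k) <= Cnorm2 (x k).
Proof. unfold vtail. destruct (k <? K)%nat; [rewrite Cnorm2_RtoC0; apply Cnorm2_nonneg | lra]. Qed.

Lemma l2_vtail K x : l2 x -> l2 (vtail K x).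
Proof. intros H. apply (l2_of_le _ x); auto. apply Cnorm2_vtail_le. Qed.

Lemma nsq_vtail K x : nsq (vtail K x) = Series (rtail K (fun k => Cnorm2 (x k))).
Proof.
  rewrite nsq_Cnorm2. apply Series_ext. intros k. unfold vtail, rtail.
  destruct (k <? K)%nat; auto. apply Cnorm2_RtoC0.
Qed.

Lemma nsq_vtail_vanishes x : l2 x -> is_lim_seq (fun K => nsq (vtail K x)) 0.
Proof.
  intros H. eapply is_lim_seq_ext; [intros K; symmetry; apply nsq_vtail|].
  apply Series_rtail_vanishes, l2_Cnorm2, H.
Qed.

Lemma amgm_abs_mul t a b : 0 < t -> Rabs (a * b) <= (t * (a * a) + (b * b) / t) / 2.
Proof.
  intros Ht. apply Rabs_le.
  assert (E1 : (t * (a * a) + b * b / t) / 2 - a * b = (t * a - b) * (t * a - b) / (2 * t))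
    by (field; lra).
  assert (E2 : (t * (a * a) + b * b / t) / 2 + a * b = (t * a + b) * (t * a + b) / (2 * t))
    by (field; lra).
  assert (0 <= (t * a - b) * (t * a - b) / (2 * t))
    by (apply Rdiv_le_0_compat; [apply Rle_0_sqr | lra]).
  assert (0 <= (t * a + b) * (t * a + b) / (2 * t))
    by (apply Rdiv_le_0_compat; [apply Rle_0_sqr | lra]).
  lra.
Qed.

(* Optimising the AM-GM bound over [t] gives the Cauchy-Schwarz form [c^2 <= A B]. *)
Lemma sqr_le_of_amgm c A B : 0 <= A -> 0 <= B ->
  (forall t, 0 < t -> Rabs c <= (t * A + B / t) / 2) -> c * c <= A * B.
Proof.
  intros HA HB H. apply Rnot_lt_le. intros Hlt.
  assert (HAB : 0 <= A * B) by (apply Rmult_le_pos; auto).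
  assert (Hc : 0 < Rabs c).
  { destruct (Req_dec c 0) as [->|Hc]; [lra | apply Rabs_pos_lt, Hc]. }
  assert (Hcc : Rabs c * Rabs c = c * c)
    by (rewrite <- Rabs_mult; apply Rabs_pos_eq, Rle_0_sqr).
  destruct (Req_dec A 0) as [->|HA0].
  - specialize (H ((B + 1) / Rabs c) ltac:(apply Rdiv_lt_0_compat; lra)).
    replace ((B + 1) / Rabs c * 0 + B / ((B + 1) / Rabs c)) with (Rabs c * (B / (B + 1))) in H
      by (field; lra).
    assert (B / (B + 1) < 1).
    { apply Rmult_lt_reg_r with (B + 1); [lra|].
      unfold Rdiv. rewrite Rmult_assoc, Rinv_l; lra. }
    assert (Rabs c * (B / (B + 1)) < Rabs c * 1) by (apply Rmult_lt_compat_l; lra).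
    lra.
  - specialize (H (Rabs c / A) ltac:(apply Rdiv_lt_0_compat; lra)).
    replace (Rabs c / A * A + B / (Rabs c / A)) with (Rabs c + A * B / Rabs c) in H by (field; lra).
    assert (Rabs c * Rabs c <= A * B / Rabs c * Rabs c) by (apply Rmult_le_compat_r; lra).
    replace (A * B / Rabs c * Rabs c) with (A * B) in H0 by (field; lra). lra.
Qed.

Lemma Cconj_mult_amgm t a b : 0 < t ->
  Rabs (fst (Cmult (Cconj a) b)) <= (t * Cnorm2 a + Cnorm2 b / t) / 2 /\
  Rabs (snd (Cmult (Cconj a) b)) <= (t * Cnorm2 a + Cnorm2 b / t) / 2.
Proof.
  intros Ht. destruct a as [a1 a2], b as [b1 b2]. unfold Cnorm2; simpl.
  pose proof (amgm_abs_mul t a1 b1 Ht). pose proof (amgm_abs_mul t a2 b2 Ht).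
  pose proof (amgm_abs_mul t a1 b2 Ht). pose proof (amgm_abs_mul t a2 b1 Ht).
  split.
  - replace (a1 * b1 - - a2 * b2) with (a1 * b1 + a2 * b2) by ring.
    eapply Rle_trans; [apply Rabs_triang|].
    replace ((t * (a1 * a1 + a2 * a2) + (b1 * b1 + b2 * b2) / t) / 2) with
      ((t * (a1 * a1) + b1 * b1 / t) / 2 + (t * (a2 * a2) + b2 * b2 / t) / 2) by (field; lra).
    lra.
  - replace (a1 * b2 + - a2 * b1) with (a1 * b2 + - (a2 * b1)) by ring.
    eapply Rle_trans; [apply Rabs_triang|]. rewrite Rabs_Ropp.
    replace ((t * (a1 * a1 + a2 * a2) + (b1 * b1 + b2 * b2) / t) / 2) with
      ((t * (a1 * a1) + b2 * b2 / t) / 2 + (t * (a2 * a2) + b1 * b1 / t) / 2) by (field; lra).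
    lra.
Qed.

Lemma ip_Cseries u v : ip u v = Cseries (fun k => Cmult (Cconj (u k)) (v k)).
Proof. reflexivity. Qed.

Lemma ip_amgm u v t : l2 u -> l2 v -> 0 < t ->
  ex_Cseries (fun k => Cmult (Cconj (u k)) (v k)) /\
  Rabs (fst (ip u v)) <= (t * nsq u + nsq v / t) / 2 /\
  Rabs (snd (ip u v)) <= (t * nsq u + nsq v / t) / 2.
Proof.
  intros Hu Hv Ht. apply l2_Cnorm2 in Hu. apply l2_Cnorm2 in Hv.
  set (bnd := fun k => (t * Cnorm2 (u k) + Cnorm2 (v k) / t) / 2).
  assert (Eb : ex_series bnd /\ Series bnd = (t * nsq u + nsq v / t) / 2).
  { assert (Hs : ex_series (fun k => / 2 * (t * Cnorm2 (u k) + / t * Cnorm2 (v k)))).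
    { apply (ex_series_scal_l (V := R_NormedModule)), (ex_series_plus (V := R_NormedModule));
        apply (ex_series_scal_l (V := R_NormedModule)); auto. }
    assert (Ext : forall k, / 2 * (t * Cnorm2 (u k) + / t * Cnorm2 (v k)) = bnd k)
      by (intros k; unfold bnd; field; lra).
    split; [eapply ex_series_ext; [exact Ext | exact Hs]|].
    rewrite <- (Series_ext _ _ Ext), Series_scal_l, Series_plus, !Series_scal_l, !nsq_Cnorm2;
      [field; lra | |]; apply (ex_series_scal_l (V := R_NormedModule)); auto. }
  destruct Eb as [Eb Sb].
  destruct (ex_series_Rabs_le _ bnd (fun k => proj1 (Cconj_mult_amgm t (u k) (v k) Ht)) Eb) as [E1 B1].
  destruct (ex_series_Rabs_le _ bnd (fun k => proj2 (Cconj_mult_amgm t (u k) (v k) Ht)) Eb) as [E2 B2].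
  rewrite Sb in B1, B2. repeat split; auto.
Qed.

Lemma ex_Cseries_ip u v : l2 u -> l2 v -> ex_Cseries (fun k => Cmult (Cconj (u k)) (v k)).
Proof. intros Hu Hv. apply (ip_amgm u v 1 Hu Hv Rlt_0_1). Qed.

Lemma Cnorm2_ip_le u v : l2 u -> l2 v -> Cnorm2 (ip u v) <= 2 * (nsq u * nsq v).
Proof.
  intros Hu Hv. pose proof (nsq_nonneg _ Hu). pose proof (nsq_nonneg _ Hv).
  assert (fst (ip u v) * fst (ip u v) <= nsq u * nsq v)
    by (apply sqr_le_of_amgm; auto; intros t Ht; apply (ip_amgm u v t Hu Hv Ht)).
  assert (snd (ip u v) * snd (ip u v) <= nsq u * nsq v)
    by (apply sqr_le_of_amgm; auto; intros t Ht; apply (ip_amgm u v t Hu Hv Ht)).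
  unfold Cnorm2. lra.
Qed.

Lemma ip_conj u v : ip v u = Cconj (ip u v).
Proof.
  rewrite !ip_Cseries, <- Cseries_Cconj. apply Cseries_ext. intros k.
  rewrite Cmult_conj, Cconj_conj. apply Cmult_comm.
Qed.

Lemma ip_e_l m f : ip (e m) f = f m.
Proof.
  rewrite ip_Cseries, (Cseries_single _ m).
  - rewrite e_eq. cfield.
  - intros k Hk. rewrite e_neq by auto. cfield.
Qed.

Lemma ip_e_r m f : ip f (e m) = Cconj (f m).
Proof. rewrite ip_conj, ip_e_l. reflexivity. Qed.

Lemma ip_vadd_r u v w : l2 u -> l2 v -> l2 w -> ip u (vadd v w) = Cplus (ip u v) (ip u w).
Proof.
  intros Hu Hv Hw. rewrite !ip_Cseries, <- Cseries_plus by (apply ex_Cseries_ip; auto).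
  apply Cseries_ext. intros k. unfold vadd. apply Cmult_plus_distr_l.
Qed.

Lemma ip_vscal_r u c v : l2 u -> l2 v -> ip u (vscal c v) = Cmult c (ip u v).
Proof.
  intros Hu Hv. rewrite !ip_Cseries, <- Cseries_scal by (apply ex_Cseries_ip; auto).
  apply Cseries_ext. intros k. unfold vscal. cfield.
Qed.

Lemma ip_vscal_l u c v : l2 u -> l2 v -> ip (vscal c v) u = Cmult (Cconj c) (ip v u).
Proof.
  intros Hu Hv. rewrite ip_conj, ip_vscal_r, (ip_conj v u), Cmult_conj, Cconj_conj by auto.
  reflexivity.
Qed.

Lemma ip_vzero_r u : ip u vzero = RtoC 0.
Proof.
  rewrite ip_Cseries, (Cseries_single _ O); intros; unfold vzero; cfield.
Qed.

Lemma ip_vsum_r u K f : l2 u -> (forall k, (k < K)%nat -> l2 (f k)) ->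
  ip u (vsum K f) = csum K (fun k => ip u (f k)).
Proof.
  intros Hu. induction K as [|K IH]; intros Hf; simpl; [apply ip_vzero_r|].
  rewrite ip_vadd_r, IH; auto. apply l2_vsum; auto.
Qed.

Lemma ip_Clim u v : l2 u -> l2 v ->
  Clim (fun K => csum K (fun k => Cmult (Cconj (u k)) (v k))) (ip u v).
Proof. intros Hu Hv. apply Clim_csum_Cseries, ex_Cseries_ip; auto. Qed.

(** * Bounded operators on l^2 *)

Definition vconj (x : vec) : vec := fun k => Cconj (x k).

Lemma l2_vconj x : l2 x -> l2 (vconj x).
Proof. intros H. apply (l2_of_le _ x); auto. intros k. unfold vconj. rewrite Cnorm2_Cconj. lra. Qed.

Lemma nsq_vconj x : nsq (vconj x) = nsq x.
Proof. rewrite !nsq_Cnorm2. apply Series_ext. intros k. apply Cnorm2_Cconj. Qed.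

Lemma Hb_intro T :
  (forall x, l2 x -> l2 (T x)) ->
  (forall x y, l2 x -> l2 y -> T (vadd x y) = vadd (T x) (T y)) ->
  (forall c x, l2 x -> T (vscal c x) = vscal c (T x)) ->
  (exists M, forall x, l2 x -> nsq (T x) <= M * nsq x) -> Hbounded T.
Proof.
  intros H1 H2 H3 H4. repeat split; auto.
  - intros x y _ _ E. apply veq_eq in E. subst. intros k; auto.
  - intros x y Hx Hy k. rewrite H2; auto.
  - intros c x Hx k. rewrite H3; auto.
Qed.

Section BoundedOperator.
Variable T : op.
Hypothesis HT : Hbounded T.

Lemma Hb_l2 x : l2 x -> l2 (T x).
Proof. apply HT. Qed.

Lemma Hb_vadd x y : l2 x -> l2 y -> T (vadd x y) = vadd (T x) (T y).
Proof. intros. apply veq_eq, HT; auto. Qed.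

Lemma Hb_vscal c x : l2 x -> T (vscal c x) = vscal c (T x).
Proof. intros. apply veq_eq, HT; auto. Qed.

Lemma Hb_bound : exists M, 0 <= M /\ forall x, l2 x -> nsq (T x) <= M * nsq x.
Proof.
  destruct HT as (_ & _ & _ & _ & M & HM). exists (Rmax M 0). split; [apply Rmax_r|].
  intros x Hx. eapply Rle_trans; [apply HM; auto|].
  apply Rmult_le_compat_r; [apply nsq_nonneg; auto | apply Rmax_l].
Qed.

Lemma Hb_vzero : T vzero = vzero.
Proof.
  assert (Z : vscal (RtoC 0) vzero = vzero)
    by (apply functional_extensionality; intros; unfold vscal, vzero; cfield).
  rewrite <- Z, Hb_vscal by apply l2_vzero.
  apply functional_extensionality; intros; unfold vscal, vzero; cfield.
Qed.

Lemma Hb_vsum K f : (forall k, (k < K)%nat -> l2 (f k)) ->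
  T (vsum K f) = vsum K (fun k => T (f k)).
Proof.
  induction K as [|K IH]; intros H; simpl; [apply Hb_vzero|].
  rewrite Hb_vadd, IH; auto. apply l2_vsum; auto.
Qed.

Lemma Hb_vtrunc K x : T (vtrunc K x) = vsum K (fun k => vscal (x k) (T (e k))).
Proof.
  rewrite vtrunc_vsum, Hb_vsum by (intros; apply l2_vscal, l2_e).
  f_equal. apply functional_extensionality; intros k. apply Hb_vscal, l2_e.
Qed.

Lemma Hb_vtrunc_apply K x p : T (vtrunc K x) p = csum K (fun k => Cmult (x k) (T (e k) p)).
Proof. rewrite Hb_vtrunc, vsum_apply. reflexivity. Qed.

Lemma Hb_vtail x K : l2 x -> T x = vadd (T (vtrunc K x)) (T (vtail K x)).
Proof.
  intros Hx. rewrite <- Hb_vadd by (auto using l2_vtrunc, l2_vtail).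
  rewrite vadd_vtrunc_vtail. reflexivity.
Qed.

Lemma Hb_vtail_vanishes x : l2 x -> exists M, 0 <= M /\
  (forall K, nsq (T (vtail K x)) <= M * nsq (vtail K x)) /\
  is_lim_seq (fun K => M * nsq (vtail K x)) 0.
Proof.
  intros Hx. destruct Hb_bound as (M & HM0 & HM). exists M. repeat split; auto using l2_vtail.
  apply is_lim_seq_scal_0, nsq_vtail_vanishes, Hx.
Qed.

Lemma Hb_apply_Clim x p : l2 x -> Clim (fun K => T (vtrunc K x) p) (T x p).
Proof.
  intros Hx. destruct (Hb_vtail_vanishes x Hx) as (M & _ & HM & Hlim).
  apply (Clim_of_le _ _ (fun K => M * nsq (vtail K x))); [intros K | exact Hlim].
  rewrite (Hb_vtail x K Hx). unfold vadd.
  replace (Cminus (T (vtrunc K x) p) (Cplus (T (vtrunc K x) p) (T (vtail K x) p)))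
    with (Copp (T (vtail K x) p)) by cfield.
  rewrite Cnorm2_Copp. eapply Rle_trans; [|apply HM].
  apply Cnorm2_le_nsq, Hb_l2, l2_vtail, Hx.
Qed.

Lemma ip_Hb_vtrunc_Clim u x : l2 u -> l2 x -> Clim (fun K => ip u (T (vtrunc K x))) (ip u (T x)).
Proof.
  intros Hu Hx. destruct (Hb_vtail_vanishes x Hx) as (M & _ & HM & Hlim).
  apply (Clim_of_le _ _ (fun K => 2 * nsq u * (M * nsq (vtail K x)))).
  - intros K. rewrite (Hb_vtail x K Hx), ip_vadd_r by (auto using Hb_l2, l2_vtrunc, l2_vtail).
    replace (Cminus (ip u (T (vtrunc K x))) (Cplus (ip u (T (vtrunc K x))) (ip u (T (vtail K x)))))
      with (Copp (ip u (T (vtail K x)))) by cfield.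
    rewrite Cnorm2_Copp. eapply Rle_trans; [apply Cnorm2_ip_le; auto using Hb_l2, l2_vtail|].
    pose proof (nsq_nonneg u Hu). rewrite Rmult_assoc.
    apply Rmult_le_compat_l; [lra|]. apply Rmult_le_compat_l; auto.
  - apply is_lim_seq_scal_0, Hlim.
Qed.

Lemma ip_Hb_vtrunc u K x : l2 u ->
  ip u (T (vtrunc K x)) = csum K (fun k => Cmult (x k) (ip u (T (e k)))).
Proof.
  intros Hu. rewrite Hb_vtrunc, ip_vsum_r by (auto using l2_vscal, Hb_l2, l2_e).
  apply csum_ext. intros k _. apply ip_vscal_r; auto using Hb_l2, l2_e.
Qed.

(* The p-th row of the matrix of a Hilbert-Schmidt [T] is square summable, so Cauchy-Schwarz applies. *)
Lemma Cnorm2_Hb_apply_le x p : ex_series (fun k => nsq (T (e k))) -> l2 x ->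
  Cnorm2 (T x p) <= 2 * (nsq x * Series (fun k => nsq (T (e k)))).
Proof.
  intros HS Hx.
  set (row := fun k => T (e k) p).
  assert (Hrow : ex_series (fun k => Cnorm2 (row k)) /\
                 Series (fun k => Cnorm2 (row k)) <= Series (fun k => nsq (T (e k)))).
  { apply ex_series_le_nonneg; auto. intros k. split; [apply Cnorm2_nonneg|].
    apply (Cnorm2_le_nsq (T (e k)) p), Hb_l2, l2_e. }
  destruct Hrow as [Hrow Srow]. rewrite <- (nsq_Cnorm2 row) in Srow. apply l2_Cnorm2 in Hrow.
  assert (Hip : T x p = ip (vconj x) row).
  { apply (Clim_unique _ _ _ (Hb_apply_Clim x p Hx)).
    eapply Clim_ext; [|apply ip_Clim; auto using l2_vconj].
    intros K. rewrite Hb_vtrunc_apply. apply csum_ext. intros k _.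
    unfold vconj, row. rewrite Cconj_conj. reflexivity. }
  rewrite Hip. eapply Rle_trans; [apply Cnorm2_ip_le; auto using l2_vconj|].
  rewrite nsq_vconj. pose proof (nsq_nonneg x Hx).
  apply Rmult_le_compat_l; [lra|]. apply Rmult_le_compat_l; auto.
Qed.

End BoundedOperator.

Lemma ip_adjoint_of_basis T S : Hbounded T -> Hbounded S ->
  (forall j k, ip (e j) (T (e k)) = ip (S (e j)) (e k)) ->
  forall x y, l2 x -> l2 y -> ip y (T x) = ip (S y) x.
Proof.
  intros HT HS Hjk.
  assert (Hbasis : forall k y, l2 y -> ip y (T (e k)) = Cconj (S y k)).
  { intros k y Hy.
    apply (Clim_unique _ _ _ (ip_Clim y (T (e k)) Hy (Hb_l2 T HT _ (l2_e k)))).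
    eapply Clim_ext; [|apply Clim_Cconj, (Hb_apply_Clim S HS y k Hy)].
    intros K. cbv beta. rewrite (Hb_vtrunc_apply S HS), <- csum_Cconj. apply csum_ext. intros j _.
    rewrite Cmult_conj, <- (ip_e_r k (S (e j))), <- Hjk, ip_e_l. reflexivity. }
  intros x y Hx Hy.
  apply (Clim_unique _ _ _ (ip_Hb_vtrunc_Clim T HT y x Hy Hx)).
  eapply Clim_ext; [|apply ip_Clim; auto using Hb_l2].
  intros K. cbv beta. rewrite (ip_Hb_vtrunc T HT) by auto. apply csum_ext. intros k _.
  rewrite Hbasis by auto. apply Cmult_comm.
Qed.

(** * Hilbert-Schmidt operators *)

Lemma HS_Hb X : HS X -> Hbounded X.
Proof. intros [H _]; exact H. Qed.

Lemma HS_ex X : HS X -> ex_series (fun n => nsq (X (e n))).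
Proof. intros [_ H]; exact H. Qed.

Lemma HS_l2 X k : HS X -> l2 (X (e k)).
Proof. intros H. apply Hb_l2, l2_e. apply HS_Hb, H. Qed.

Lemma hs_nonneg X : HS X -> 0 <= hs_nsq X.
Proof. intros H. apply Series_nonneg; [intros; apply nsq_nonneg, HS_l2 | apply HS_ex]; auto. Qed.

Lemma hs_nsq_ext X Y : (forall k, nsq (X (e k)) = nsq (Y (e k))) -> hs_nsq X = hs_nsq Y.
Proof. apply Series_ext. Qed.

Lemma HS_of_le X Y : Hbounded X -> (forall k, nsq (X (e k)) <= nsq (Y (e k))) -> HS Y ->
  HS X /\ hs_nsq X <= hs_nsq Y.
Proof.
  intros HX Hle HY.
  assert (Hb : forall k, 0 <= nsq (X (e k)) <= nsq (Y (e k))).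
  { intros k. split; auto. apply nsq_nonneg, Hb_l2, l2_e; auto. }
  destruct (ex_series_le_nonneg _ _ Hb (HS_ex Y HY)) as [E S].
  split; [split|]; auto.
Qed.

Lemma Hbounded_op_add X Y : Hbounded X -> Hbounded Y -> Hbounded (op_add X Y).
Proof.
  intros HX HY. apply Hb_intro; unfold op_add.
  - intros x Hx. apply l2_vadd; apply Hb_l2; auto.
  - intros x y Hx Hy. rewrite (Hb_vadd X), (Hb_vadd Y); auto.
    apply functional_extensionality; intros k; unfold vadd; cfield.
  - intros c x Hx. rewrite (Hb_vscal X), (Hb_vscal Y); auto.
    apply functional_extensionality; intros k; unfold vadd, vscal; cfield.
  - destruct (Hb_bound X HX) as (M1 & _ & HM1). destruct (Hb_bound Y HY) as (M2 & _ & HM2).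
    exists (2 * M1 + 2 * M2). intros x Hx.
    eapply Rle_trans; [apply l2_vadd; apply Hb_l2; auto|].
    specialize (HM1 x Hx). specialize (HM2 x Hx). lra.
Qed.

Lemma Hbounded_op_scal c X : Hbounded X -> Hbounded (op_scal c X).
Proof.
  intros HX. apply Hb_intro; unfold op_scal.
  - intros x Hx. apply l2_vscal, Hb_l2; auto.
  - intros x y Hx Hy. rewrite (Hb_vadd X); auto.
    apply functional_extensionality; intros k; unfold vadd, vscal; cfield.
  - intros d x Hx. rewrite (Hb_vscal X); auto.
    apply functional_extensionality; intros k; unfold vscal; cfield.
  - destruct (Hb_bound X HX) as (M & _ & HM).
    exists (Cnorm2 c * M). intros x Hx. rewrite nsq_vscal, Rmult_assoc.
    apply Rmult_le_compat_l; auto using Cnorm2_nonneg.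
Qed.

Lemma HS_add X Y : HS X -> HS Y ->
  HS (op_add X Y) /\ hs_nsq (op_add X Y) <= 2 * hs_nsq X + 2 * hs_nsq Y.
Proof.
  intros HX HY.
  assert (Hs : ex_series (fun k => 2 * nsq (X (e k)) + 2 * nsq (Y (e k)))).
  { apply (ex_series_plus (V := R_NormedModule)); apply (ex_series_scal_l (V := R_NormedModule));
      apply HS_ex; auto. }
  assert (Hb : forall k, 0 <= nsq (op_add X Y (e k)) <= 2 * nsq (X (e k)) + 2 * nsq (Y (e k))).
  { intros k. split; [apply nsq_nonneg|]; apply l2_vadd; apply HS_l2; auto. }
  destruct (ex_series_le_nonneg _ _ Hb Hs) as [E S].
  rewrite Series_plus, !Series_scal_l in S;
    try apply (ex_series_scal_l (V := R_NormedModule)); try apply HS_ex; auto.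
  split; [split|]; auto. apply Hbounded_op_add; apply HS_Hb; auto.
Qed.

Lemma HS_scal c X : HS X -> HS (op_scal c X) /\ hs_nsq (op_scal c X) = Cnorm2 c * hs_nsq X.
Proof.
  intros HX. unfold hs_nsq, op_scal. split; [split|].
  - apply Hbounded_op_scal, HS_Hb, HX.
  - eapply ex_series_ext; [intros n; symmetry; apply nsq_vscal|].
    apply (ex_series_scal_l (V := R_NormedModule)), HS_ex, HX.
  - rewrite <- Series_scal_l. apply Series_ext. intros n. apply nsq_vscal.
Qed.

Lemma op_sub_op_add X Y : op_sub X Y = op_add X (op_scal (RtoC (-1)) Y).
Proof.
  apply functional_extensionality; intros x. unfold op_sub, op_add, op_scal. apply vsub_vadd.
Qed.

Lemma HS_sub X Y : HS X -> HS Y ->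
  HS (op_sub X Y) /\ hs_nsq (op_sub X Y) <= 2 * hs_nsq X + 2 * hs_nsq Y.
Proof.
  intros HX HY. rewrite op_sub_op_add.
  destruct (HS_scal (RtoC (-1)) Y HY) as [H1 E1].
  destruct (HS_add _ _ HX H1) as [H2 E2]. split; auto.
  rewrite E1, Cnorm2_RtoC_m1, Rmult_1_l in E2. exact E2.
Qed.

Lemma HS_zero : HS op_zero.
Proof.
  split.
  - apply Hb_intro; unfold op_zero.
    + intros; apply l2_vzero.
    + intros. apply functional_extensionality; intros k; unfold vadd, vzero; cfield.
    + intros. apply functional_extensionality; intros k; unfold vscal, vzero; cfield.
    + exists 0. intros. rewrite nsq_vzero. lra.
  - exists 0. unfold op_zero. rewrite nsq_vzero. apply (is_series_finite (fun _ => 0) O). auto.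
Qed.

Definition osum (K : nat) (F : nat -> op) : op := fun x => vsum K (fun k => F k x).

Lemma HS_osum K F : (forall k, (k < K)%nat -> HS (F k)) -> HS (osum K F).
Proof.
  induction K as [|K IH]; intros H; [apply HS_zero|].
  change (osum (S K) F) with (op_add (osum K F) (F K)). apply HS_add; auto.
Qed.

(* [rank1 n y] is [e_n y^*]; note that [eps n m] is [rank1 n (e m)] by conversion. *)
Definition rank1 (n : nat) (y : vec) : op := fun f => vscal (ip y f) (e n).

Lemma rank1_e n y k : rank1 n y (e k) = vscal (Cconj (y k)) (e n).
Proof. unfold rank1. rewrite ip_e_r. reflexivity. Qed.

Lemma eps_apply n m f : eps n m f = vscal (f m) (e n).
Proof. unfold eps. rewrite ip_e_l. reflexivity. Qed.

Lemma HS_rank1 n y : l2 y -> HS (rank1 n y) /\ hs_nsq (rank1 n y) = nsq y.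
Proof.
  intros Hy.
  assert (Ek : forall k, nsq (rank1 n y (e k)) = Cnorm2 (y k)).
  { intros k. rewrite rank1_e, nsq_vscal, nsq_e, Cnorm2_Cconj. ring. }
  split; [split|].
  - apply Hb_intro; unfold rank1.
    + intros; apply l2_vscal, l2_e.
    + intros. rewrite ip_vadd_r by auto.
      apply functional_extensionality; intros k; unfold vadd, vscal; cfield.
    + intros. rewrite ip_vscal_r by auto.
      apply functional_extensionality; intros k; unfold vscal; cfield.
    + exists (2 * nsq y). intros x Hx. rewrite nsq_vscal, nsq_e, Rmult_1_r.
      pose proof (Cnorm2_ip_le y x Hy Hx). lra.
  - eapply ex_series_ext; [intros k; symmetry; apply Ek | apply l2_Cnorm2, Hy].
  - unfold hs_nsq. rewrite nsq_Cnorm2. apply Series_ext, Ek.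
Qed.

Lemma HS_eps n m : HS (eps n m).
Proof. apply HS_rank1, l2_e. Qed.

(* [proj_rows P X] is [Q X], [Q] the coordinate projection onto the span of the [e_i] with [P i]. *)
Definition vmask (P : nat -> bool) (v : vec) : vec := fun i => if P i then v i else RtoC 0.
Definition proj_rows (P : nat -> bool) (X : op) : op := fun f => vmask P (X f).

Lemma l2_vmask P v : l2 v -> l2 (vmask P v) /\ nsq (vmask P v) <= nsq v.
Proof.
  apply l2_of_le. intros k. unfold vmask. destruct (P k); [lra|].
  rewrite Cnorm2_RtoC0. apply Cnorm2_nonneg.
Qed.

Lemma HS_proj_rows P X : HS X -> HS (proj_rows P X) /\ hs_nsq (proj_rows P X) <= hs_nsq X.
Proof.
  intros HX. pose proof (HS_Hb _ HX) as BX. apply HS_of_le; auto.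
  - apply Hb_intro; unfold proj_rows.
    + intros x Hx. apply l2_vmask, Hb_l2; auto.
    + intros x y Hx Hy. rewrite (Hb_vadd X); auto.
      apply functional_extensionality; intros k; unfold vmask, vadd; destruct (P k); auto; cfield.
    + intros d x Hx. rewrite (Hb_vscal X); auto.
      apply functional_extensionality; intros k; unfold vmask, vscal; destruct (P k); auto; cfield.
    + destruct (Hb_bound X BX) as (M & _ & HM).
      exists M. intros x Hx. eapply Rle_trans; [apply l2_vmask, Hb_l2|]; auto.
  - intros k. apply l2_vmask, HS_l2, HX.
Qed.

Definition head_rows (N : nat) : op -> op := proj_rows (fun i => (i <? N)%nat).
Definition row (m : nat) : op -> op := proj_rows (fun i => (i =? m)%nat).

Lemma ip2_Cseries X Y : ip2 X Y = Cseries (fun n => ip (X (e n)) (Y (e n))).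
Proof. reflexivity. Qed.

Lemma ex_Cseries_ip2 X Y : HS X -> HS Y -> ex_Cseries (fun n => ip (X (e n)) (Y (e n))).
Proof.
  intros HX HY.
  set (bnd := fun n => (1 * nsq (X (e n)) + nsq (Y (e n)) / 1) / 2).
  assert (Hb : ex_series bnd).
  { apply (ex_series_ext (fun n => / 2 * (nsq (X (e n)) + nsq (Y (e n)))));
      [intros n; unfold bnd; simpl; field|].
    apply (ex_series_scal_l (V := R_NormedModule)), (ex_series_plus (V := R_NormedModule));
      apply HS_ex; auto. }
  pose proof (fun n => ip_amgm _ _ 1 (HS_l2 X n HX) (HS_l2 Y n HY) Rlt_0_1) as B.
  split; apply (ex_series_Rabs_le _ bnd); auto; intros n; apply B.
Qed.

Lemma ip2_ext_r X Y Z : (forall n, Y (e n) = Z (e n)) -> ip2 X Y = ip2 X Z.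
Proof. intros H. rewrite !ip2_Cseries. apply Cseries_ext. intros; rewrite H; auto. Qed.

Lemma ip2_conj X Y : ip2 Y X = Cconj (ip2 X Y).
Proof.
  rewrite !ip2_Cseries, <- Cseries_Cconj. apply Cseries_ext. intros; apply ip_conj.
Qed.

Lemma ip2_add_r X Y Z : HS X -> HS Y -> HS Z -> ip2 X (op_add Y Z) = Cplus (ip2 X Y) (ip2 X Z).
Proof.
  intros HX HY HZ. rewrite !ip2_Cseries, <- Cseries_plus by (apply ex_Cseries_ip2; auto).
  apply Cseries_ext. intros n. apply ip_vadd_r; apply HS_l2; auto.
Qed.

Lemma ip2_scal_r X c Y : HS X -> HS Y -> ip2 X (op_scal c Y) = Cmult c (ip2 X Y).
Proof.
  intros HX HY. rewrite !ip2_Cseries, <- Cseries_scal by (apply ex_Cseries_ip2; auto).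
  apply Cseries_ext. intros n. apply ip_vscal_r; apply HS_l2; auto.
Qed.

Lemma ip2_add_l X Y Z : HS X -> HS Y -> HS Z -> ip2 (op_add Y Z) X = Cplus (ip2 Y X) (ip2 Z X).
Proof.
  intros. rewrite ip2_conj, ip2_add_r, (ip2_conj Y X), (ip2_conj Z X) by auto.
  rewrite Cplus_conj, !Cconj_conj. reflexivity.
Qed.

Lemma ip2_scal_l X c Y : HS X -> HS Y -> ip2 (op_scal c Y) X = Cmult (Cconj c) (ip2 Y X).
Proof.
  intros. rewrite ip2_conj, ip2_scal_r, (ip2_conj Y X), Cmult_conj, Cconj_conj by auto.
  reflexivity.
Qed.

Lemma ip2_eps T n k : HS T -> ip2 (eps n k) T = T (e k) n.
Proof.
  intros HT. rewrite ip2_Cseries, (Cseries_single _ k).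
  - rewrite eps_apply, ip_vscal_l, ip_e_l, e_eq by (auto using l2_e, HS_l2). cfield.
  - intros l Hl. rewrite eps_apply, ip_vscal_l, e_neq by (auto using l2_e, HS_l2). cfield.
Qed.

(** * The operator A on S_2 *)

Section S2BoundedOperator.
Variable A : op -> op.
Hypothesis HA : S2bounded A.

Lemma A_HS X : HS X -> HS (A X).
Proof. apply HA. Qed.

Lemma A_add X Y x : HS X -> HS Y -> l2 x -> A (op_add X Y) x = vadd (A X x) (A Y x).
Proof. intros. apply veq_eq. apply HA; auto. Qed.

Lemma A_scal c X x : HS X -> l2 x -> A (op_scal c X) x = vscal c (A X x).
Proof. intros. apply veq_eq. apply HA; auto. Qed.

Lemma A_bound : exists M, 0 <= M /\ forall X, HS X -> hs_nsq (A X) <= M * hs_nsq X.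
Proof.
  destruct HA as (_ & _ & _ & _ & M & HM). exists (Rmax M 0). split; [apply Rmax_r|].
  intros X HX. eapply Rle_trans; [apply HM; auto|].
  apply Rmult_le_compat_r; [apply hs_nonneg; auto | apply Rmax_l].
Qed.

Lemma A_zero x : l2 x -> A op_zero x = vzero.
Proof.
  intros Hx.
  assert (Z : op_scal (RtoC 0) op_zero = op_zero).
  { apply functional_extensionality; intros y. apply functional_extensionality; intros k.
    unfold op_scal, op_zero, vscal, vzero; cfield. }
  rewrite <- Z, A_scal by (auto using HS_zero).
  apply functional_extensionality; intros; unfold vscal, vzero; cfield.
Qed.

Lemma A_sub X Y x : HS X -> HS Y -> l2 x -> A (op_sub X Y) x = vsub (A X x) (A Y x).
Proof.
  intros HX HY Hx. rewrite op_sub_op_add, A_add, A_scal, vsub_vadd; auto. apply HS_scal, HY.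
Qed.

Lemma A_osum K F x : (forall k, (k < K)%nat -> HS (F k)) -> l2 x ->
  A (osum K F) x = vsum K (fun k => A (F k) x).
Proof.
  intros HF Hx. induction K as [|K IH]; simpl; [apply A_zero; auto|].
  change (osum (S K) F) with (op_add (osum K F) (F K)).
  rewrite A_add, IH; auto. apply HS_osum; auto.
Qed.

Lemma A_apply_dist M X Z x p : (forall X, HS X -> hs_nsq (A X) <= M * hs_nsq X) -> 0 <= M ->
  HS X -> HS Z -> l2 x ->
  Cnorm2 (Cminus (A X x p) (A Z x p)) <= 2 * nsq x * (M * hs_nsq (op_sub X Z)).
Proof.
  intros HM HM0 HX HZ Hx.
  destruct (HS_sub X Z HX HZ) as [Hs _].
  replace (Cminus (A X x p) (A Z x p)) with (A (op_sub X Z) x p) by (rewrite A_sub; auto).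
  pose proof (A_HS _ Hs) as HAs.
  eapply Rle_trans; [apply (Cnorm2_Hb_apply_le _ (HS_Hb _ HAs) x p (HS_ex _ HAs) Hx)|].
  pose proof (nsq_nonneg x Hx). specialize (HM _ Hs). fold (hs_nsq (A (op_sub X Z))).
  rewrite <- Rmult_assoc. apply Rmult_le_compat_l; lra.
Qed.

(* Polarization: the quadratic form [<X, A X>_2] is real, tested at [X + Y] and [X + i Y]. *)
Lemma A_hermitian : is_nonneg HS ip2 A -> forall X Y, HS X -> HS Y ->
  ip2 X (A Y) = Cconj (ip2 Y (A X)).
Proof.
  intros Hpos X Y HX HY.
  pose proof (A_HS _ HX) as AX. pose proof (A_HS _ HY) as AY.
  destruct (HS_scal (0,1) Y HY) as [HiY _].
  pose proof (proj1 (HS_add X Y HX HY)) as HXY.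
  pose proof (proj1 (HS_add X _ HX HiY)) as HXiY.
  destruct (Hpos _ HXY) as [I1 _]. destruct (Hpos _ HXiY) as [I2 _].
  destruct (Hpos _ HX) as [I3 _]. destruct (Hpos _ HY) as [I4 _].
  rewrite (ip2_ext_r _ _ (op_add (A X) (A Y))) in I1
    by (intros; apply A_add; auto using l2_e).
  rewrite (ip2_ext_r _ _ (op_add (A X) (op_scal (0,1) (A Y)))) in I2
    by (intros; rewrite A_add, A_scal; auto using l2_e).
  rewrite ip2_add_l, !ip2_add_r in I1 by (auto using Hbounded_op_add, HS_add; apply HS_add; auto).
  rewrite ip2_add_l, !ip2_add_r, !ip2_scal_l, !ip2_scal_r in I2
    by (auto; try apply HS_add; try apply HS_scal; auto).
  revert I1 I2 I3 I4.
  destruct (ip2 X (A X)) as [a1 a2], (ip2 X (A Y)) as [b1 b2],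
    (ip2 Y (A X)) as [c1 c2], (ip2 Y (A Y)) as [d1 d2].
  unfold Cconj; simpl. intros. f_equal; lra.
Qed.

End S2BoundedOperator.

(* The operator whose only nonzero row is the m-th one, [(c 0, ..., c (J-1), 0, ...)]. *)
Definition rowsum (m : nat) (c : nat -> C) (J : nat) : op := osum J (fun j => op_scal (c j) (eps m j)).

Lemma HS_rowsum m c J : HS (rowsum m c J).
Proof. apply HS_osum. intros; apply HS_scal, HS_eps. Qed.

Lemma rowsum_apply m c J f : rowsum m c J f = vscal (csum J (fun j => Cmult (c j) (f j))) (e m).
Proof.
  apply functional_extensionality; intros i. unfold rowsum, osum, op_scal. rewrite vsum_apply.
  induction J as [|J IH]; simpl; [|rewrite IH, eps_apply]; unfold vscal, vadd; cfield.
Qed.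

Lemma rowsum_e m c J k : rowsum m c J (e k) = vscal (if (k <? J)%nat then c k else RtoC 0) (e m).
Proof.
  rewrite rowsum_apply, (csum_single _ _ k).
  - rewrite e_eq. destruct (k <? J)%nat; f_equal; cfield.
  - intros j Hj. rewrite e_neq by auto. cfield.
Qed.

Lemma hs_nsq_rowsum m c J : hs_nsq (rowsum m c J) = rsum J (fun k => Cnorm2 (c k)).
Proof.
  unfold hs_nsq. rewrite (Series_finite _ J).
  - apply rsum_ext. intros k Hk.
    rewrite rowsum_e, nsq_vscal, nsq_e, (proj2 (Nat.ltb_lt k J)) by auto. ring.
  - intros k Hk. rewrite rowsum_e, nsq_vscal, (proj2 (Nat.ltb_ge k J)), Cnorm2_RtoC0 by auto. ring.
Qed.

Lemma hs_nsq_rowsum_sub m c J Z : (forall k, Z (e k) = vscal (c k) (e m)) ->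
  hs_nsq (op_sub (rowsum m c J) Z) = Series (rtail J (fun k => Cnorm2 (c k))).
Proof.
  intros HZ. apply Series_ext. intros k. unfold op_sub. rewrite rowsum_e, HZ.
  replace (vsub (vscal (if (k <? J)%nat then c k else RtoC 0) (e m)) (vscal (c k) (e m)))
    with (vscal (if (k <? J)%nat then RtoC 0 else Copp (c k)) (e m)).
  - rewrite nsq_vscal, nsq_e, Rmult_1_r. unfold rtail.
    destruct (k <? J)%nat; [apply Cnorm2_RtoC0 | apply Cnorm2_Copp].
  - apply functional_extensionality; intros i; unfold vsub, vscal. destruct (k <? J)%nat; cfield.
Qed.

Section RowExpansion.
Variable A : op -> op.
Hypothesis HA : S2bounded A.

Lemma A_rowsum_apply m c J x p : l2 x ->
  A (rowsum m c J) x p = csum J (fun j => Cmult (c j) (A (eps m j) x p)).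
Proof.
  intros Hx. unfold rowsum.
  rewrite (A_osum A HA), vsum_apply by (auto; intros; apply HS_scal, HS_eps).
  apply csum_ext. intros k _. rewrite A_scal; auto using HS_eps.
Qed.

(* [rowsum m c J] tends in S_2 to [Z], and [A] is continuous. *)
Lemma A_rowsum_Clim m c Z x p : HS Z -> (forall k, Z (e k) = vscal (c k) (e m)) ->
  ex_series (fun k => Cnorm2 (c k)) -> l2 x ->
  Clim (fun J => A (rowsum m c J) x p) (A Z x p).
Proof.
  intros HZ RZ Ec Hx.
  destruct (A_bound A HA) as (M & HM0 & HM).
  apply (Clim_of_le _ _ (fun J => 2 * nsq x * (M * Series (rtail J (fun k => Cnorm2 (c k)))))).
  - intros J. rewrite <- (hs_nsq_rowsum_sub m c J Z) by auto.
    apply (A_apply_dist A HA); auto using HS_rowsum.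
  - do 2 apply is_lim_seq_scal_0. apply Series_rtail_vanishes, Ec.
Qed.

End RowExpansion.

(** * The coefficients a_nm *)

(* [alpha = (1-i)/2] and [beta = (1+i)/2] are the coefficients in [epshat]. *)
Definition alpha : C := (1/2, -(1/2)).
Definition beta : C := (1/2, 1/2).

Lemma csum_Cnorm2 J v :
  csum J (fun j => Cmult (Cconj (v j)) (v j)) = RtoC (rsum J (fun j => Cnorm2 (v j))).
Proof. induction J as [|J IH]; simpl; [|rewrite IH]; unfold Cnorm2; cfield. Qed.

Section Coefficients.
Variable A : op -> op.
Hypothesis HA : S2bounded A.

(* The matrix of [bcoeff n m] has entries [<e_j, bcoeff n m e_k> = <eps n k, A (eps m j)>_2]. *)
Definition bcoeff (n m : nat) : op := fun x j => A (eps m j) x n.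
Definition acoeff (n m : nat) : op := op_add (op_scal alpha (bcoeff n m)) (op_scal beta (bcoeff m n)).

(* Testing [A] on the row operator built from the conjugate of [bcoeff n m x] itself. *)
Lemma rsum_bcoeff_le M n m x J : 0 <= M -> (forall X, HS X -> hs_nsq (A X) <= M * hs_nsq X) ->
  l2 x -> rsum J (fun j => Cnorm2 (bcoeff n m x j)) <= 2 * M * nsq x.
Proof.
  intros HM0 HM Hx.
  set (v := bcoeff n m x). set (S := rsum J (fun j => Cnorm2 (v j))).
  assert (HS0 : 0 <= S) by (apply rsum_nonneg; intros; apply Cnorm2_nonneg).
  assert (Hval : A (rowsum m (vconj v) J) x n = RtoC S).
  { unfold S. rewrite (A_rowsum_apply A HA), <- csum_Cnorm2 by auto. reflexivity. }
  assert (Hhs : hs_nsq (rowsum m (vconj v) J) = S).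
  { rewrite hs_nsq_rowsum. apply rsum_ext. intros; apply Cnorm2_Cconj. }
  pose proof (HS_rowsum m (vconj v) J) as HR. pose proof (A_HS A HA _ HR) as HAR.
  pose proof (Cnorm2_Hb_apply_le _ (HS_Hb _ HAR) x n (HS_ex _ HAR) Hx) as B.
  fold (hs_nsq (A (rowsum m (vconj v) J))) in B. rewrite Hval in B.
  pose proof (HM _ HR) as B2. rewrite Hhs in B2.
  replace (Cnorm2 (RtoC S)) with (S * S) in B by (unfold Cnorm2; simpl; ring).
  pose proof (nsq_nonneg x Hx).
  assert (S * S <= (2 * M * nsq x) * S) by nra.
  destruct (Req_dec S 0) as [Z|Z]; [rewrite Z; nra|].
  apply (Rmult_le_reg_r S); [lra | exact H0].
Qed.

Lemma bcoeff_bound : exists Cb, 0 <= Cb /\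
  forall n m x, l2 x -> l2 (bcoeff n m x) /\ nsq (bcoeff n m x) <= Cb * nsq x.
Proof.
  destruct (A_bound A HA) as (M & HM0 & HM). exists (2 * M). split; [lra|].
  intros n m x Hx.
  destruct (ex_series_of_bounded_rsum (fun j => Cnorm2 (bcoeff n m x j)) (2 * M * nsq x))
    as [Ex Sx]; [intros; apply Cnorm2_nonneg | intros; apply rsum_bcoeff_le; auto |].
  split; [apply l2_Cnorm2, Ex | rewrite nsq_Cnorm2; exact Sx].
Qed.

Lemma Hb_bcoeff n m : Hbounded (bcoeff n m).
Proof.
  assert (HAE : forall j, Hbounded (A (eps m j))) by (intros; apply HS_Hb, A_HS, HS_eps; auto).
  destruct bcoeff_bound as (Cb & _ & HCb).
  apply Hb_intro.
  - intros x Hx. apply HCb, Hx.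
  - intros x y Hx Hy. apply functional_extensionality; intros j. unfold bcoeff.
    rewrite (Hb_vadd _ (HAE j)); auto.
  - intros c x Hx. apply functional_extensionality; intros j. unfold bcoeff.
    rewrite (Hb_vscal _ (HAE j)); auto.
  - exists Cb. intros x Hx. apply HCb, Hx.
Qed.

Lemma Hb_acoeff n m : Hbounded (acoeff n m).
Proof. apply Hbounded_op_add; apply Hbounded_op_scal, Hb_bcoeff. Qed.

Hypothesis Hpos : is_nonneg HS ip2 A.

Lemma bcoeff_e_conj n m j k : bcoeff n m (e k) j = Cconj (bcoeff m n (e j) k).
Proof.
  unfold bcoeff.
  rewrite <- (ip2_eps (A (eps m j))), <- (ip2_eps (A (eps n k))) by (apply A_HS, HS_eps; auto).
  apply A_hermitian; auto using HS_eps.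
Qed.

Lemma selfadjoint_acoeff n m : selfadjointH (acoeff n m).
Proof.
  split; [apply Hb_acoeff|]. intros x y Hx Hy.
  apply ip_adjoint_of_basis; auto using Hb_acoeff.
  intros j k. rewrite ip_e_l, ip_e_r. unfold acoeff, op_add, op_scal, vadd, vscal.
  rewrite (bcoeff_e_conj n m j k), (bcoeff_e_conj m n j k).
  destruct (bcoeff m n (e j) k), (bcoeff n m (e j) k). unfold alpha, beta, Cconj. cfield.
Qed.

End Coefficients.

(** * Square partial sums *)

Lemma row_e m eta k : row m eta (e k) = vscal (eta (e k) m) (e m).
Proof.
  apply functional_extensionality; intros i. unfold row, proj_rows, vmask, vscal.
  destruct (Nat.eqb_spec i m) as [->|Hi]; [rewrite e_eq | rewrite e_neq by auto]; cfield.
Qed.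

Lemma head_rows_osum N eta : head_rows N eta = osum N (fun m => row m eta).
Proof.
  apply functional_extensionality; intros f. apply functional_extensionality; intros i.
  unfold osum, head_rows, row, proj_rows, vmask. rewrite vsum_apply, (csum_single N _ i).
  - rewrite Nat.eqb_refl. reflexivity.
  - intros k Hk. rewrite (proj2 (Nat.eqb_neq i k)) by auto. reflexivity.
Qed.

Lemma csum_zero N : csum N (fun _ => RtoC 0) = RtoC 0.
Proof. induction N as [|N IH]; simpl; [|rewrite IH]; cfield. Qed.

Lemma csum_csum_e N p (f g : nat -> nat -> C) :
  csum N (fun n => csum N (fun m => Cplus (Cmult (e n p) (f n m)) (Cmult (g n m) (e m p)))) =
  if (p <? N)%nat then Cplus (csum N (fun m => f p m)) (csum N (fun n => g n p)) else RtoC 0.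
Proof.
  assert (Hdelta : forall h : nat -> C,
    csum N (fun m => Cmult (h m) (e m p)) = if (p <? N)%nat then h p else RtoC 0).
  { intros h. rewrite (csum_single N _ p).
    - rewrite e_eq. destruct (p <? N)%nat; cfield.
    - intros m Hm. rewrite e_neq by auto. cfield. }
  rewrite (csum_ext N _ (fun n => Cplus (Cmult (csum N (fun m => f n m)) (e n p))
                                     (if (p <? N)%nat then g n p else RtoC 0))).
  - rewrite csum_plus, Hdelta. destruct (p <? N)%nat; [reflexivity|]. rewrite csum_zero. cfield.
  - intros n _. rewrite csum_plus, Hdelta. f_equal.
    rewrite Cmult_comm, <- csum_scal. reflexivity.
Qed.

Section PartialSums.
Variable A : op -> op.
Hypothesis HA : S2bounded A.

(* Both sides are limits of [A (rowsum m c J) x p], with [c k] the m-th row of [eta]. *)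
Lemma A_row_apply eta x p m : HS eta -> l2 x -> eta (bcoeff A p m x) m = A (row m eta) x p.
Proof.
  intros He Hx.
  set (c := fun k => eta (e k) m).
  pose proof (HS_Hb _ He) as Be.
  assert (Hb : l2 (bcoeff A p m x)) by (apply (Hb_l2 _ (Hb_bcoeff A HA p m)), Hx).
  assert (Ec : ex_series (fun k => Cnorm2 (c k))).
  { apply (ex_series_le_nonneg _ (fun k => nsq (eta (e k)))); [|apply HS_ex; auto].
    intros k; split; [apply Cnorm2_nonneg | apply (Cnorm2_le_nsq (eta (e k))), HS_l2, He]. }
  apply (Clim_unique _ _ _ (Hb_apply_Clim _ Be _ m Hb)).
  eapply Clim_ext; [|apply (A_rowsum_Clim A HA m c); auto using HS_proj_rows, row_e].
  - intros J. cbv beta. rewrite (A_rowsum_apply A HA), (Hb_vtrunc_apply _ Be) by auto.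
    apply csum_ext. intros k _. apply Cmult_comm.
  - apply HS_proj_rows, He.
Qed.

Lemma alpha_beta_mix u v : Cplus (Cmult beta (Cplus (Cmult alpha u) (Cmult beta v)))
                                 (Cmult alpha (Cplus (Cmult alpha v) (Cmult beta u))) = u.
Proof. unfold alpha, beta. cfield. Qed.

Lemma sq_partial_acoeff eta N x : HS eta -> l2 x ->
  sq_partial (acoeff A) eta N x = vtrunc N (A (head_rows N eta) x).
Proof.
  intros He Hx. pose proof (HS_Hb _ He) as Be.
  assert (Hb : forall n m, l2 (bcoeff A n m x)) by (intros; apply (Hb_l2 _ (Hb_bcoeff A HA n m)), Hx).
  apply functional_extensionality; intros p. unfold sq_partial. rewrite vsum_apply.
  set (w := fun n m => eta (acoeff A n m x)).
  rewrite (csum_ext N _ (fun n => csum N (fun m =>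
    Cplus (Cmult (e n p) (Cmult beta (w n m m))) (Cmult (Cmult alpha (w n m n)) (e m p))))).
  2: { intros n _. rewrite vsum_apply. apply csum_ext. intros m _.
       unfold epshat, eps, vadd, vscal. rewrite !ip_e_l. unfold w. cfield. }
  rewrite csum_csum_e. unfold vtrunc. destruct (p <? N)%nat; [|reflexivity].
  rewrite head_rows_osum, (A_osum A HA), vsum_apply, <- csum_plus
    by (auto; intros; apply HS_proj_rows, He).
  apply csum_ext. intros m _. unfold w, acoeff, op_add, op_scal.
  rewrite !(Hb_vadd eta Be), !(Hb_vscal eta Be) by auto using l2_vscal.
  unfold vadd, vscal. rewrite <- A_row_apply by auto. apply alpha_beta_mix.
Qed.

End PartialSums.

(** * Convergence in S_2 *)

Lemma hs_nsq_head_rows_sub X N :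
  hs_nsq (op_sub (head_rows N X) X) = Series (fun k => nsq (vtail N (X (e k)))).
Proof.
  apply Series_ext. intros k. unfold op_sub, head_rows, proj_rows, vmask.
  replace (vsub _ (X (e k))) with (vscal (RtoC (-1)) (vtail N (X (e k)))).
  - rewrite nsq_vscal, Cnorm2_RtoC_m1. ring.
  - apply functional_extensionality; intros i. unfold vsub, vscal, vtail.
    destruct (i <? N)%nat; cfield.
Qed.

Lemma hs_head_rows_vanishes X : HS X -> is_lim_seq (fun N => hs_nsq (op_sub (head_rows N X) X)) 0.
Proof.
  intros HX. eapply is_lim_seq_ext; [intros N; symmetry; apply hs_nsq_head_rows_sub|].
  apply (Series_dominated_vanishes _ (fun k => nsq (X (e k)))); [| apply HS_ex, HX |].
  - intros N k. split; [apply nsq_nonneg, l2_vtail, HS_l2, HX|].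
    apply l2_of_le; [apply Cnorm2_vtail_le | apply HS_l2, HX].
  - intros k. apply nsq_vtail_vanishes, HS_l2, HX.
Qed.

Section Convergence.
Variable A : op -> op.
Hypothesis HA : S2bounded A.

Lemma sq_partial_acoeff_sub eta N k : HS eta ->
  op_sub (sq_partial (acoeff A) eta N) (A eta) (e k) =
  op_add (head_rows N (A (op_sub (head_rows N eta) eta))) (op_sub (head_rows N (A eta)) (A eta)) (e k).
Proof.
  intros He. assert (HN : HS (head_rows N eta)) by (apply HS_proj_rows, He).
  set (h := head_rows N eta) in *.
  unfold op_add, head_rows, proj_rows. rewrite (A_sub A HA) by auto using l2_e.
  unfold op_sub. rewrite (sq_partial_acoeff A HA) by auto using l2_e.
  apply functional_extensionality; intros i.
  unfold vmask, vtrunc, vsub, vadd, h. destruct (i <? N)%nat; cfield.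
Qed.

Lemma sq_partial_acoeff_cvg eta : HS eta ->
  is_lim_seq (fun N => hs_nsq (op_sub (sq_partial (acoeff A) eta N) (A eta))) 0.
Proof.
  intros He. destruct (A_bound A HA) as (M & HM0 & HM).
  pose proof (A_HS A HA _ He) as HAe.
  apply (is_lim_seq_le_le (fun _ => 0) _
    (fun N => 2 * M * hs_nsq (op_sub (head_rows N eta) eta)
            + 2 * hs_nsq (op_sub (head_rows N (A eta)) (A eta)))); [|apply is_lim_seq_const|].
  - intros N.
    assert (HD : HS (op_sub (head_rows N eta) eta)) by (apply HS_sub; auto; apply HS_proj_rows, He).
    assert (HAD := A_HS A HA _ HD).
    assert (HT : HS (op_sub (head_rows N (A eta)) (A eta)))
      by (apply HS_sub; auto; apply HS_proj_rows, HAe).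
    rewrite (hs_nsq_ext _ _ (fun k => f_equal nsq (sq_partial_acoeff_sub eta N k He))).
    destruct (HS_add _ _ (proj1 (HS_proj_rows (fun i => (i <? N)%nat) _ HAD)) HT) as [HS' Hle].
    split; [apply hs_nonneg, HS'|]. eapply Rle_trans; [exact Hle|].
    pose proof (proj2 (HS_proj_rows (fun i => (i <? N)%nat) _ HAD)). pose proof (HM _ HD).
    fold (head_rows N (A (op_sub (head_rows N eta) eta))) in *. lra.
  - replace (Finite 0) with (Finite (0 + 0)) by (f_equal; ring).
    apply is_lim_seq_plus'; apply is_lim_seq_scal_0, hs_head_rows_vanishes; auto.
Qed.

End Convergence.

(** * The diagonal coefficients *)

Section DiagonalCoefficients.
Variable A : op -> op.
Hypothesis HA : S2bounded A.
Hypothesis Hpos : is_nonneg HS ip2 A.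

Lemma acoeff_diag n : acoeff A n n = bcoeff A n n.
Proof.
  apply functional_extensionality; intros x. apply functional_extensionality; intros k.
  unfold acoeff, op_add, op_scal, vadd, vscal, alpha, beta. cfield.
Qed.

Lemma ip_bcoeff_diag_sym n x y : l2 x -> l2 y -> ip y (bcoeff A n n x) = ip (bcoeff A n n y) x.
Proof.
  apply ip_adjoint_of_basis; try apply Hb_bcoeff; auto.
  intros j k. rewrite ip_e_l, ip_e_r. apply bcoeff_e_conj; auto.
Qed.

Lemma A_rank1_apply n y k : l2 y -> A (rank1 n y) (e k) n = ip y (bcoeff A n n (e k)).
Proof.
  intros Hy.
  apply (Clim_unique (fun J => A (rowsum n (vconj y) J) (e k) n)).
  - apply (A_rowsum_Clim A HA); auto using l2_e.
    + apply HS_rank1, Hy.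
    + intros j. apply rank1_e.
    + apply l2_Cnorm2, l2_vconj, Hy.
  - eapply Clim_ext; [|apply ip_Clim; auto; apply (Hb_l2 _ (Hb_bcoeff A HA n n)), l2_e].
    intros J. cbv beta. rewrite (A_rowsum_apply A HA) by apply l2_e. reflexivity.
Qed.

Lemma ip_acoeff_diag n y : l2 y -> ip y (acoeff A n n y) = Cconj (ip2 (rank1 n y) (A (rank1 n y))).
Proof.
  intros Hy. pose proof (HS_rank1 n y Hy) as [HY _].
  rewrite acoeff_diag, ip2_Cseries, <- Cseries_Cconj, ip_Cseries.
  apply Cseries_ext. intros k.
  rewrite rank1_e, ip_vscal_l, ip_e_l, A_rank1_apply, ip_bcoeff_diag_sym, ip_e_r
    by (auto using l2_e, HS_l2, A_HS).
  rewrite Cmult_conj, !Cconj_conj. reflexivity.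
Qed.

Lemma rank1_nonzero n y : l2 y -> ~ veq y vzero -> ~ op_eq (rank1 n y) op_zero.
Proof.
  intros Hy Hne Heq. apply Hne. intros k. specialize (Heq (e k) (l2_e k) n).
  rewrite rank1_e in Heq. unfold op_zero, vzero, vscal in *. rewrite e_eq in Heq.
  rewrite <- (Cconj_conj (y k)). revert Heq. destruct (y k). unfold Cconj, RtoC.
  cbn. intros H. injection H. intros. f_equal; lra.
Qed.

Lemma nonneg_acoeff_diag n : is_nonneg l2 ip (acoeff A n n).
Proof.
  intros y Hy. rewrite ip_acoeff_diag by auto.
  destruct (Hpos _ (proj1 (HS_rank1 n y Hy))) as [Him Hre].
  destruct (ip2 (rank1 n y) (A (rank1 n y))). unfold Cconj. simpl in *. split; lra.
Qed.

Lemma positive_acoeff_diag n : is_positive HS op_eq op_zero ip2 A ->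
  is_positive l2 veq vzero ip (acoeff A n n).
Proof.
  intros [_ Hp]. split; [apply nonneg_acoeff_diag|]. intros y Hy Hne.
  rewrite ip_acoeff_diag by auto.
  specialize (Hp _ (proj1 (HS_rank1 n y Hy)) (rank1_nonzero n y Hy Hne)).
  destruct (ip2 (rank1 n y) (A (rank1 n y))). unfold Cconj. simpl in *. lra.
Qed.

Lemma qf_vals_acoeff_diag_lower n m : (forall r, qf_vals HS hs_nsq ip2 A r -> m <= r) ->
  forall r, qf_vals l2 nsq ip (acoeff A n n) r -> m <= r.
Proof.
  intros Hm r (y & Hy & Hn & Hr). apply Hm. exists (rank1 n y).
  destruct (HS_rank1 n y Hy) as [HY Hhs]. split; [exact HY | split].
  - rewrite Hhs. exact Hn.
  - rewrite Hr, ip_acoeff_diag by auto. destruct (ip2 (rank1 n y) (A (rank1 n y))). reflexivity.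
Qed.

Lemma glb_acoeff_diag_ge mA n ma : is_glb (qf_vals HS hs_nsq ip2 A) mA ->
  is_glb (qf_vals l2 nsq ip (acoeff A n n)) ma -> mA <= ma.
Proof. intros [HmA _] [_ Hma]. apply Hma, qf_vals_acoeff_diag_lower, HmA. Qed.

Lemma posdef_acoeff_diag n : posdef HS hs_nsq ip2 A -> posdef l2 nsq ip (acoeff A n n).
Proof.
  intros (m & Hglb & Hm).
  destruct (is_glb_exists (qf_vals l2 nsq ip (acoeff A n n))) as [ma Hma].
  - exists (Re (ip (e O) (acoeff A n n (e O)))). exists (e O). auto using l2_e, nsq_e.
  - exists m. apply qf_vals_acoeff_diag_lower, Hglb.
  - exists ma. split; auto. pose proof (glb_acoeff_diag_ge m n ma Hglb Hma). lra.
Qed.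

End DiagonalCoefficients.

Theorem proposition3p14 (A : op -> op) :
  S2bounded A -> is_nonneg HS ip2 A ->
  exists a : nat -> nat -> op,
    (forall n m, selfadjointH (a n m)) /\
    (forall eta, HS eta ->
       forall eps0, 0 < eps0 -> exists N0, forall N, (N0 <= N)%nat ->
         hs_nsq (op_sub (sq_partial a eta N) (A eta)) < eps0) /\
    (forall n, is_nonneg l2 ip (a n n)) /\
    (is_positive HS op_eq op_zero ip2 A -> forall n, is_positive l2 veq vzero ip (a n n)) /\
    (posdef HS hs_nsq ip2 A -> forall n, posdef l2 nsq ip (a n n)) /\
    (forall mA, is_glb (qf_vals HS hs_nsq ip2 A) mA ->
       forall n ma, is_glb (qf_vals l2 nsq ip (a n n)) ma -> mA <= ma).
Proof.
  intros HA Hpos. exists (acoeff A).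
  split; [intros n m; apply selfadjoint_acoeff; auto|].
  split; [intros eta He; apply is_lim_seq_0_eventually_lt, sq_partial_acoeff_cvg; auto|].
  split; [intros n; apply nonneg_acoeff_diag; auto|].
  split; [intros Hp n; apply positive_acoeff_diag; auto|].
  split; [intros Hd n; apply posdef_acoeff_diag; auto|].
  intros mA HmA n ma Hma. apply (glb_acoeff_diag_ge A HA Hpos mA n ma); auto.
Qed.
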